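(* Suppose the conditional gradient algorithm chooses $\theta_k$ by the exact line search $\theta_k\in\arg\min_{\theta\in[0,1]}\{(1-\theta)\mathrm{gap}(x_k,g_k)+\mathcal D(x_k,s_k,\theta)\}$ and $(\mathcal D,\mathrm{gap})$ satisfies the $(q,0)$-growth property for some $q>1$ and $M>0$, i.e. $\mathcal D(x,s,\theta)\le M\theta^q/q$ for all $x\in\mathrm{dom}(\Psi)$, $s\in\partial\Psi^*(-\nabla f(x))$, $\theta\in[0,1]$. Then $\mathrm{gap}_1\le M/q$ and for all $k\ge1$ \[ \mathrm{gap}_k\le M\Big(\frac{q}{k-1+q^{\frac{q}{q-1}}}\Big)^{q-1}. \] In particular, for $q=2$, $\mathrm{gap}_k\le \frac{2M}{k+3}$ for all $k\ge1$.
   Context: Let $f,\Psi:\mathbb{R}^n\to\mathbb{R}\cup\{\infty\}$ be closed proper convex functions such that (A1) $f$ is differentiable on $\mathrm{dom}(\Psi)$, and (A2) for every $x\in\mathrm{dom}(f)$ the set $\arg\min_s\{\langle\nabla f(x),s\rangle+\Psi(s)\}$ is nonempty. $f^*,\Psi^*$ denote convex conjugates; $\arg\min_y\{\langle g,y\rangle+\Psi(y)\}=\partial\Psi^*(-g)$. $D_f(y,x)=f(y)-f(x)-\langle\nabla f(x),y-x\rangle$. Duality gap: $\mathrm{gap}(x,u)=f(x)+\Psi(x)+f^*(u)+\Psi^*(-u)$ for $x\in\mathrm{dom}(\Psi)$, $u\in\mathrm{dom}(f^* )$. For $x,s\in\mathrm{dom}(\Psi)$, $\theta\in[0,1]$: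 $\mathcal{D}(x,s,\theta)=D_f(x+\theta(s-x),x)+\Psi(x+\theta(s-x))-(1-\theta)\Psi(x)-\theta\Psi(s)$. Conditional gradient algorithm: given $x_0\in\mathrm{dom}(\Psi)$, for $k=0,1,2,\dots$ let $g_k=\nabla f(x_k)$, pick $s_k\in\arg\min_y\{\langle g_k,y\rangle+\Psi(y)\}$ and $\theta_k\in[0,1]$, and set $x_{k+1}=(1-\theta_k)x_k+\theta_k s_k$. The best duality gaps are $\mathrm{gap}_k=\min_{i=0,\dots,k}\mathrm{gap}(x_k,g_i)$. *)

From HB Require Import structures.
From mathcomp Require Import all_boot all_order all_algebra.
From mathcomp Require Import all_classical all_reals all_analysis.
Set Implicit Arguments. Unset Strict Implicit. Unset Printing Implicit Defensive.
Import Order.TTheory GRing.Theory Num.Theory.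
Import numFieldNormedType.Exports.
Local Open Scope classical_set_scope.
Local Open Scope ring_scope.

Section CG.
Variables (R : realType) (n : nat).
Notation V := 'rV[R]_n.

Definition dotv (u v : V) : R := \sum_(i < n) u ord0 i * v ord0 i.

Definition edom (f : V -> \bar R) : set V := [set x | (f x < +oo)%E].

Definition proper_fun (f : V -> \bar R) : Prop :=
  (forall x, f x != -oo%E) /\ exists x, (f x < +oo)%E.

Definition convex_fun (f : V -> \bar R) : Prop :=
  forall (x y : V) (t : R), 0 <= t <= 1 ->
    (f ((1 - t) *: x + t *: y)%R <= (1 - t)%R%:E * f x + t%:E * f y)%E.

(* closed = lower semicontinuous = all sublevel sets closed *)
Definition closed_fun (f : V -> \bar R) : Prop :=
  forall a : R, closed [set x | (f x <= a%:E)%E].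

Definition closed_proper_convex (f : V -> \bar R) : Prop :=
  [/\ closed_fun f, proper_fun f & convex_fun f].

Definition is_gradient (f : V -> \bar R) (x g : V) : Prop :=
  exists F : V -> R, (\forall y \near x, f y = (F y)%:E) /\
    differentiable F x /\ (forall h, 'd F x h = dotv g h).

Definition conj_fun (f : V -> \bar R) (u : V) : \bar R :=
  ereal_sup (range (fun x => ((dotv u x)%:E - f x)%E)).

Definition is_argmin_lin (Psi : V -> \bar R) (g s : V) : Prop :=
  forall y, ((dotv g s)%:E + Psi s <= (dotv g y)%:E + Psi y)%E.

Definition gap (f Psi : V -> \bar R) (x u : V) : \bar R :=
  (f x + Psi x + conj_fun f u + conj_fun Psi (- u)%R)%E.

Definition bregman (f : V -> \bar R) (gf : V -> V) (y x : V) : \bar R :=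
  (f y - f x - (dotv (gf x) (y - x)%R)%:E)%E.

Definition Dcal (f Psi : V -> \bar R) (gf : V -> V) (x s : V) (t : R) : \bar R :=
  let y := (x + t *: (s - x))%R in
  (bregman f gf y x + Psi y - (1 - t)%R%:E * Psi x - t%:E * Psi s)%E.

(* best duality gap gap_k = min_{i=0..k} gap(x_k, g_i) *)
Definition best_gap (f Psi : V -> \bar R) (gf : V -> V) (x : nat -> V) (k : nat)
  : \bar R :=
  \big[Order.min/+oo%E]_(i < k.+1) gap f Psi (x k) (gf (x i)).

End CG.

From HB Require Import structures.
From mathcomp Require Import all_boot all_order all_algebra.
From mathcomp Require Import all_classical all_reals all_analysis.
From mathcomp Require Import ring lra.
Import Order.TTheory GRing.Theory Num.Theory.
Import numFieldNormedType.Exports.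
Local Open Scope classical_set_scope.
Local Open Scope ring_scope.

(* Write F = f + Psi and G_k = gap(x_k, g_k).  Since g_i = grad f(x_i) and s_i minimizes
   <g_i, .> + Psi, the suprema defining f^*(g_i) and Psi^*(-g_i) are attained at x_i and
   s_i, whence gap(x_k, g_i) = F(x_k) - F(x_i) + G_i.  Comparing the exact line search with
   any fixed step t and using the growth property gives
   F(x_{i+1}) <= F(x_i) - t G_i + M t^q / q.
   If all the gaps gap(x_k, g_i), i <= k, exceeded some B > 0, then u_i = B + F(x_i) - F(x_k)
   would satisfy u_i < G_i, hence u_{i+1} <= (1 - t) u_i + M t^q / q for every t in [0, 1].
   Taking the minimizing step t = (u_i / M)^(1/(q-1)) and Bernoulli's inequality show that
   u_i^(-1/(q-1)) increases by at least M^(-1/(q-1)) / q per iteration; as u_1 < M / q and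
   u_k = B, this bounds B by the claimed rate. *)

Lemma powRV (R : realType) (a r : R) : 0 < a -> a^-1 `^ r = (a `^ r)^-1.
Proof.
move=> a0; apply: (mulIf (lt0r_neq0 (powR_gt0 r a0))).
by rewrite -powRM ?invr_ge0 ?ltW // !mulVf ?powR1 // lt0r_neq0 ?powR_gt0.
Qed.

Lemma bernoulli_invpowR (R : realType) (w r : R) : 0 <= w < 1 -> 0 < r ->
  1 + r * w <= ((1 - w) `^ r)^-1.
Proof.
move=> /andP[w0 w1] r0.
have w1_neq0 : 1 - w != 0 by apply/lt0r_neq0; lra.
rewrite /powR (negbTE w1_neq0) -expRN.
apply: le_trans (expR_ge1Dx _).
rewrite lerD2l -mulrN ler_wpM2l ?(ltW r0) // lerNr.
by have := @le_ln1Dx R (- w); apply; lra.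
Qed.

Section growth_recursion.
Local Set Implicit Arguments. Local Unset Strict Implicit.
Variables (R : realType) (q M : R).
Hypotheses (q_gt1 : 1 < q) (M_gt0 : 0 < M).

Let r := (q - 1)^-1.
Let m := M `^ r.

Let q_gt0 : 0 < q. Proof. exact: lt_trans ltr01 q_gt1. Qed.
Let r_gt0 : 0 < r. Proof. by rewrite invr_gt0 subr_gt0. Qed.
Let rq1 : r * (q - 1) = 1. Proof. by rewrite mulVf // subr_eq0 gt_eqF. Qed.
Let m_gt0 : 0 < m. Proof. exact: powR_gt0. Qed.

Lemma growth_step (a b : R) : 0 < a -> a <= M -> 0 < b ->
  (forall t, 0 <= t <= 1 -> b <= (1 - t) * a + M * t `^ q / q) ->
  (a `^ r)^-1 + (m * q)^-1 <= (b `^ r)^-1.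
Proof.
move=> a0 aM b0 rec.
(* the minimizer of the right-hand side of [rec] *)
set t := (a / M) `^ r.
have aM_ge0 : 0 <= a / M by rewrite divr_ge0 ?ltW.
have t0 : 0 < t by apply/powR_gt0/divr_gt0.
have t1 : t <= 1.
  have -> : (1 : R) = 1 `^ r by rewrite powR1.
  rewrite ge0_ler_powR ?nnegrE ?(ltW r_gt0) //.
  by rewrite ler_pdivrMr // mul1r.
have tq : t `^ q = t * (a / M).
  rewrite -powRrM (_ : r * q = r + 1); last by rewrite -[X in _ = _ + X]rq1; ring.
  by rewrite powRD ?powRr1 // mulf_neq0 ?invr_eq0 ?lt0r_neq0 ?implybT.
set w := t * (1 - q^-1).
have w01 : 0 <= w < 1.
  have : q^-1 < 1 by rewrite invf_lt1.
  have : 0 < q^-1 by rewrite invr_gt0.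
  rewrite /w; nra.
have b_le : b <= a * (1 - w).
  have -> : a * (1 - w) = (1 - t) * a + M * t `^ q / q.
    by rewrite tq /w; field; rewrite !lt0r_neq0.
  by apply: rec; rewrite (ltW t0) t1.
have at_m : (a `^ r)^-1 * t = m^-1.
  by rewrite /t powRM ?invr_ge0 ?ltW // powRV // mulrA mulVf ?mul1r ?lt0r_neq0 ?powR_gt0.
have aw0 : 0 < a * (1 - w) by apply: mulr_gt0 => //; lra.
apply: (@le_trans _ _ ((a `^ r)^-1 * (1 + r * w))).
  rewrite mulrDr mulr1 lerD2l [leRHS](_ : _ = (a `^ r)^-1 * t * (r * (q - 1)) / q).
    by rewrite at_m rq1 mulr1 invfM.
  by rewrite /w; field; rewrite !lt0r_neq0 ?powR_gt0.
apply: (@le_trans _ _ (((a * (1 - w)) `^ r)^-1)); last first.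
  rewrite lef_pV2 ?posrE ?powR_gt0 //.
  by apply: ge0_ler_powR; rewrite ?nnegrE ?(ltW r_gt0) ?(ltW b0) ?(ltW aw0).
rewrite powRM ?(ltW a0) ?subr_ge0 ?(ltW (proj2 (andP w01))) //.
by rewrite invfM ler_wpM2l ?invr_ge0 ?powR_ge0 // bernoulli_invpowR.
Qed.

Section recursion.
Variables (u : nat -> R) (k : nat).
Hypothesis rec : forall i, (i < k)%N -> forall t, 0 <= t <= 1 ->
  u i.+1 <= (1 - t) * u i + M * t `^ q / q.

Lemma growth_recursion_nonincreasing i j : (i <= j <= k)%N -> u j <= u i.
Proof.
move=> /andP[]; elim: j => [|j IH]; first by rewrite leqn0 => /eqP->.
rewrite leq_eqVlt ltnS => /predU1P[<- //|ij] jk.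
apply: le_trans (IH ij (ltnW jk)).
have := @rec j jk 0; rewrite lexx ler01 powR0 ?gt_eqF // => /(_ isT).
by rewrite subr0 mul1r mulr0 mul0r addr0.
Qed.

Lemma growth_recursion_invpowR : u 0%N <= M -> 0 < u k ->
  (u 0%N `^ r)^-1 + k%:R / (m * q) <= (u k `^ r)^-1.
Proof.
move=> u0M uk_gt0.
have u_gt0 j : (j <= k)%N -> 0 < u j.
  move=> jk; apply: lt_le_trans uk_gt0 _.
  by apply: growth_recursion_nonincreasing; rewrite jk leqnn.
suff acc j : (j <= k)%N -> (u 0%N `^ r)^-1 + j%:R / (m * q) <= (u j `^ r)^-1.
  exact: acc.
elim: j => [|j IH] jk; first by rewrite mul0r addr0.
have ujM : u j <= M.
  by apply: le_trans u0M; apply: growth_recursion_nonincreasing; rewrite (ltnW jk).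
rewrite -natr1 mulrDl mul1r addrA.
apply: le_trans (growth_step (u_gt0 _ (ltnW jk)) ujM (u_gt0 _ jk) (rec jk)).
by rewrite lerD2r IH // ltnW.
Qed.

Lemma growth_recursion_rate : u 0%N < M / q -> 0 < u k ->
  u k < M * (q / (k%:R + q `^ (q / (q - 1)))) `^ (q - 1).
Proof.
move=> u0_lt uk_gt0.
have Mq_le : M / q <= M by rewrite ler_pdivrMr // ler_peMr // ltW.
have u0_gt0 : 0 < u 0%N.
  by apply: lt_le_trans uk_gt0 _; apply: growth_recursion_nonincreasing; rewrite leqnn.
have acc := growth_recursion_invpowR (ltW (lt_le_trans u0_lt Mq_le)) uk_gt0.
set D := k%:R + q `^ (q / (q - 1)).
have D_gt0 : 0 < D by rewrite /D ltr_wpDl // powR_gt0.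
have Mq_invpowR : ((M / q) `^ r)^-1 = q `^ r / m.
  by rewrite powRM ?invr_ge0 ?ltW // powRV // invfM invrK mulrC.
have q_powR : q `^ (q / (q - 1)) = q * q `^ r.
  rewrite (_ : q / (q - 1) = 1 + r); last by rewrite /r; field; rewrite subr_eq0 gt_eqF.
  by rewrite powRD ?powRr1 ?ltW // lt0r_neq0 ?implybT.
have uk_lt : (m * q)^-1 * D < (u k `^ r)^-1.
  apply: lt_le_trans acc.
  rewrite [X in X < _](_ : _ = ((M / q) `^ r)^-1 + k%:R / (m * q)); last first.
    by rewrite Mq_invpowR /D q_powR; field; rewrite !lt0r_neq0.
  have Mq_gt0 : 0 < M / q by rewrite divr_gt0.
  rewrite ltrD2r ltf_pV2 ?posrE ?powR_gt0 //.
  by apply: gt0_ltr_powR; rewrite // nnegrE ltW.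
have ukr_lt : u k `^ r < m * q / D.
  by rewrite -ltf_pV2 ?posrE ?divr_gt0 ?mulr_gt0 ?powR_gt0 // invf_div mulrC.
have -> : u k = (u k `^ r) `^ (q - 1) by rewrite -powRrM rq1 powRr1 // ltW.
have -> : M = m `^ (q - 1) by rewrite -powRrM rq1 powRr1 // ltW.
rewrite -powRM ?divr_ge0 ?ltW // mulrA.
by apply: gt0_ltr_powR; rewrite // ?subr_gt0 // nnegrE ?powR_ge0 // ltW // divr_gt0 ?mulr_gt0.
Qed.

End recursion.

End growth_recursion.

Lemma ereal_sup_range_max (R : realType) (T : Type) (h : T -> \bar R) (x0 : T) :
  (forall y, (h y <= h x0)%E) -> ereal_sup (range h) = h x0.
Proof.
move=> h_le; apply/eqP; rewrite eq_le; apply/andP; split.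
  by apply: ge_ereal_sup => _ [y _ <-].
by apply: ereal_sup_ubound; exists x0.
Qed.

Section convex_analysis.
Local Set Implicit Arguments. Local Unset Strict Implicit.
Variables (R : realType) (n : nat).
Local Notation V := 'rV[R]_n.

Lemma dotvB (g a b : V) : dotv g (a - b) = dotv g a - dotv g b.
Proof. by rewrite /dotv -sumrB; apply: eq_bigr => i _; rewrite !mxE mulrBr. Qed.

Lemma dotvZ (g a : V) (t : R) : dotv g (t *: a) = t * dotv g a.
Proof. by rewrite /dotv mulr_sumr; apply: eq_bigr => i _; rewrite mxE mulrCA. Qed.

Lemma dotvNl (g a : V) : dotv (- g) a = - dotv g a.
Proof. by rewrite /dotv -sumrN; apply: eq_bigr => i _; rewrite mxE mulNr. Qed.

Lemma is_gradient_fin (f : V -> \bar R) (x g : V) :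
  is_gradient f x g -> f x = (fine (f x))%:E.
Proof. by move=> [F [f_near _]]; rewrite (nbhs_singleton f_near). Qed.

Lemma edom_fin (f : V -> \bar R) (x : V) :
  proper_fun f -> edom f x -> f x = (fine (f x))%:E.
Proof. by move=> [f_neqNy _]; rewrite /edom /=; have := f_neqNy x; case: (f x). Qed.

Lemma edom_convex_comb (f : V -> \bar R) (a b : V) (t : R) :
  convex_fun f -> proper_fun f -> edom f a -> edom f b -> 0 <= t <= 1 ->
  edom f ((1 - t) *: a + t *: b).
Proof.
move=> f_cvx f_proper fa fb t01; rewrite /edom /=.
apply: le_lt_trans (f_cvx a b t t01) _.
by rewrite (edom_fin f_proper fa) (edom_fin f_proper fb) -!EFinM -EFinD ltry.
Qed.

Lemma is_argmin_lin_edom (Psi : V -> \bar R) (g s : V) :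
  proper_fun Psi -> is_argmin_lin Psi g s -> edom Psi s.
Proof.
move=> Psi_proper s_min; case: (Psi_proper) => _ [z Psi_z].
have := s_min z; rewrite (edom_fin Psi_proper Psi_z) -EFinD /edom /=.
by case: (Psi s) => [c||] //= _; exact: ltry.
Qed.

Lemma is_argmin_lin_subgradient (Psi : V -> \bar R) (g s : V) (b : R) :
  is_argmin_lin Psi g s -> Psi s = b%:E ->
  forall y, (Psi s + (dotv (- g) (y - s))%:E <= Psi y)%E.
Proof.
move=> s_min Psi_s y; have := s_min y; rewrite Psi_s.
case: (Psi y) => [c||] //=; last by move=> _; rewrite leey.
by rewrite -!EFinD !lee_fin dotvNl dotvB; lra.
Qed.

(* differentiate the convexity inequality along [y - x] at [0+] *)
Lemma convex_gradient_le (f : V -> \bar R) (x g : V) :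
  convex_fun f -> proper_fun f -> is_gradient f x g ->
  forall y, (f x + (dotv g (y - x))%:E <= f y)%E.
Proof.
move=> f_cvx [f_neqNy _] [F [f_near [F_diff dF]]] y.
have fx : f x = (F x)%:E := nbhs_singleton f_near.
case fy: (f y) => [c| |]; last first.
- by have := f_neqNy y; rewrite fy.
- by rewrite leey.
rewrite fx -EFinD lee_fin -lerBrDl.
set v := y - x.
rewrite -dF -deriveE //.
have F_derivable : derivable F x v := diff_derivable F_diff.
have quotient_cvg : (fun h : R => h^-1 * (F (h *: v + x) - F x)) @ 0^' --> 'D_v F x.
  exact: F_derivable.
apply: (cvgr_to_le (cvg_dnbhs_at_right quotient_cvg)).
have line_cvg : (fun h : R => h *: v + x) @ 0 --> x.
  rewrite -[X in _ --> X]add0r -(scale0r v).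
  by apply: cvgD; [apply: cvgZ; [exact: cvg_id | exact: cvg_cst] | exact: cvg_cst].
have f_line : \forall h \near (0 : R), f (h *: v + x) = (F (h *: v + x))%:E.
  exact: line_cvg _ f_near.
near=> h.
have h_gt0 : 0 < h by near: h; exact: nbhs_right_gt.
have h_le1 : h <= 1 by near: h; exact: nbhs_right_ltW.
have f_h : f (h *: v + x) = (F (h *: v + x))%:E.
  by near: h; move: f_line; apply: filterS => z + _.
have := f_cvx x y h; rewrite (ltW h_gt0) h_le1 => /(_ isT).
have -> : (1 - h) *: x + h *: y = h *: v + x.
  by rewrite /v scalerBr scalerBl scale1r addrAC [RHS]addrC [RHS]addrA.
rewrite f_h fx fy -!EFinM -EFinD lee_fin => cvx_h /=.
by rewrite ler_pdivrMl // mulrBr; move: cvx_h; rewrite mulrBl mul1r; lra.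
Unshelve. all: by end_near.
Qed.

Lemma conj_fun_subgradient (f : V -> \bar R) (x g : V) (a : R) :
  (forall y, (f x + (dotv g (y - x))%:E <= f y)%E) -> f x = a%:E ->
  conj_fun f g = (dotv g x - a)%:E.
Proof.
move=> subgrad fx; rewrite /conj_fun EFinB -fx.
apply: ereal_sup_range_max => y; have := subgrad y; rewrite fx.
case: (f y) => [c||] //=; last by rewrite addeNy leNye.
by rewrite -EFinD -!EFinB !lee_fin dotvB; lra.
Qed.

End convex_analysis.

Lemma rate_q2 (R : realType) (M : R) (k : nat) :
  M * (2 / (k%:R - 1 + 2 `^ (2 / (2 - 1)))) `^ (2 - 1) = 2 * M / (k%:R + 3).
Proof.
have -> : (2 : R) - 1 = 1 by lra.
rewrite divr1 powR_mulrn // (_ : k%:R - 1 + 2 ^+ 2 = k%:R + 3); last by ring.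
by rewrite powRr1 ?divr_ge0 ?addr_ge0 // mulrA [M * 2]mulrC.
Qed.

Section conditional_gradient.
Local Set Implicit Arguments. Local Unset Strict Implicit.
Variables (R : realType) (n : nat).
Local Notation V := 'rV[R]_n.
Variables (f Psi : V -> \bar R) (gf : V -> V) (x s : nat -> V) (theta : nat -> R).
Variables (q M : R).
Hypotheses (f_convex : convex_fun f) (f_proper : proper_fun f).
Hypotheses (Psi_convex : convex_fun Psi) (Psi_proper : proper_fun Psi).
Hypothesis gf_gradient : forall y, edom Psi y -> is_gradient f y (gf y).
Hypothesis x0_edom : edom Psi (x 0%N).
Hypothesis s_argmin : forall k, is_argmin_lin Psi (gf (x k)) (s k).
Hypothesis line_search : forall k, 0 <= theta k <= 1 /\
  forall t, 0 <= t <= 1 ->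
    ((1 - theta k)%:E * gap f Psi (x k) (gf (x k))
       + Dcal f Psi gf (x k) (s k) (theta k)
     <= (1 - t)%:E * gap f Psi (x k) (gf (x k)) + Dcal f Psi gf (x k) (s k) t)%E.
Hypothesis x_succ : forall k, x k.+1 = (1 - theta k) *: x k + theta k *: s k.
Hypotheses (q_gt1 : 1 < q) (M_gt0 : 0 < M).
Hypothesis growth : forall y z t, edom Psi y -> is_argmin_lin Psi (gf y) z ->
  0 <= t <= 1 -> (Dcal f Psi gf y z t <= (M * t `^ q / q)%:E)%E.

(* [fw_gap k] is gap(x_k, g_k) (see [gap_iterateE]); taking [fine] parts loses nothing
   since all the values involved are finite along the iteration *)
Definition objective (y : V) : R := fine (f y) + fine (Psi y).
Definition fw_gap (k : nat) : R :=
  fine (Psi (x k)) - fine (Psi (s k)) + dotv (gf (x k)) (x k - s k).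

Let s_edom k : edom Psi (s k). Proof. exact: is_argmin_lin_edom Psi_proper (s_argmin k). Qed.

Lemma iterate_edom k : edom Psi (x k).
Proof.
elim: k => // k IH; rewrite x_succ.
exact: edom_convex_comb Psi_convex Psi_proper IH (s_edom k) (line_search k).1.
Qed.

Lemma gap_iterateE k i :
  gap f Psi (x k) (gf (x i)) = (objective (x k) - objective (x i) + fw_gap i)%:E.
Proof.
have gi := gf_gradient (iterate_edom i).
have Psi_si := edom_fin Psi_proper (s_edom i).
rewrite /gap (conj_fun_subgradient (convex_gradient_le f_convex f_proper gi)
  (is_gradient_fin gi)).
rewrite (conj_fun_subgradient (is_argmin_lin_subgradient (s_argmin i) Psi_si) Psi_si).
rewrite (is_gradient_fin (gf_gradient (iterate_edom k))).
rewrite (edom_fin Psi_proper (iterate_edom k)) -!EFinD; congr EFin.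
by rewrite /objective /fw_gap dotvNl dotvB; ring.
Qed.

Lemma Dcal_iterateE k t : 0 <= t <= 1 ->
  Dcal f Psi gf (x k) (s k) t =
  (objective ((1 - t) *: x k + t *: s k) - objective (x k) + t * fw_gap k)%:E.
Proof.
move=> t01; set y := (1 - t) *: x k + t *: s k.
have y_edom : edom Psi y by exact: edom_convex_comb (iterate_edom k) (s_edom k) t01.
rewrite /Dcal /bregman /=.
have -> : x k + t *: (s k - x k) = y.
  by rewrite /y scalerBr scalerBl scale1r addrA addrAC.
have -> : y - x k = t *: (s k - x k).
  by rewrite /y scalerBr scalerBl scale1r addrAC [X in X + _]addrAC subrr add0r addrC.
rewrite (is_gradient_fin (gf_gradient y_edom)).
rewrite (is_gradient_fin (gf_gradient (iterate_edom k))).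
rewrite (edom_fin Psi_proper y_edom) (edom_fin Psi_proper (iterate_edom k)).
rewrite (edom_fin Psi_proper (s_edom k)) dotvZ -!EFinM -!EFinD; congr EFin.
by rewrite /objective /fw_gap !dotvB; ring.
Qed.

(* the exact line search does at least as well as any fixed step [t] *)
Lemma objective_descent k t : 0 <= t <= 1 ->
  objective (x k.+1) <= objective (x k) - t * fw_gap k + M * t `^ q / q.
Proof.
move=> t01; have [theta01 best] := line_search k.
have := best t t01; have := growth (iterate_edom k) (s_argmin k) t01.
rewrite !gap_iterateE !Dcal_iterateE // -x_succ -!EFinM -!EFinD !lee_fin.
by rewrite subrr add0r; lra.
Qed.

Lemma best_gap_lt k B : (B%:E < best_gap f Psi gf x k)%E ->
  forall i, (i <= k)%N -> B < objective (x k) - objective (x i) + fw_gap i.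
Proof.
move=> /bigmin_gtP[_ gap_gt] i ik.
by have := gap_gt (Ordinal (ik : (i < k.+1)%N)) isT; rewrite gap_iterateE lte_fin.
Qed.

Lemma best_gap_lt_first k B : (B%:E < best_gap f Psi gf x k)%E ->
  B + objective (x 1%N) - objective (x k) < M / q.
Proof.
move=> /best_gap_lt /(_ 0%N isT); have := objective_descent 0 (t := 1).
by rewrite ler01 lexx powR1 mul1r mulr1 => /(_ isT) descent0 gap0; lra.
Qed.

Lemma best_gap1_le : (best_gap f Psi gf x 1 <= (M / q)%:E)%E.
Proof.
by rewrite leNgt; apply/negP => /best_gap_lt_first; rewrite addrK ltxx.
Qed.

Lemma best_gap_rate k : (1 <= k)%N ->
  (best_gap f Psi gf x k
     <= (M * (q / (k%:R - 1 + q `^ (q / (q - 1)))) `^ (q - 1))%:E)%E.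
Proof.
move=> k_ge1; set B := M * _; rewrite leNgt; apply/negP => B_lt.
have q_gt0 : 0 < q := lt_trans ltr01 q_gt1.
have B_gt0 : 0 < B.
  apply/mulr_gt0/powR_gt0/divr_gt0 => //.
  by rewrite ltr_wpDl ?subr_ge0 ?ler1n ?powR_gt0.
(* [u j < fw_gap j.+1] by [best_gap_lt], which turns [objective_descent] into the recursion *)
pose u j := B + objective (x j.+1) - objective (x k).
have rec j : (j < k.-1)%N -> forall t, 0 <= t <= 1 ->
    u j.+1 <= (1 - t) * u j + M * t `^ q / q.
  move=> jk t t01; have [t_ge0 _] := andP t01.
  have gap_gt := best_gap_lt B_lt (leq_trans jk (leq_pred k)).
  have := ler_wpM2l t_ge0 (ltW gap_gt).
  have := objective_descent j.+1 t01.
  by rewrite /u => descent tgap_gt; lra.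
have := growth_recursion_rate q_gt1 M_gt0 rec (best_gap_lt_first B_lt).
rewrite /u prednK // addrK -subn1 natrB // => /(_ B_gt0).
by rewrite ltxx.
Qed.

End conditional_gradient.

Theorem mainTheorem4 (R : realType) (n : nat) (f Psi : 'rV[R]_n -> \bar R)
  (gf : 'rV[R]_n -> 'rV[R]_n)
  (x s : nat -> 'rV[R]_n) (theta : nat -> R) (q M : R) :
  closed_proper_convex f -> closed_proper_convex Psi ->
  (* (A1): f differentiable on dom(Psi), with gradient gf *)
  (forall y, edom Psi y -> is_gradient f y (gf y)) ->
  (* (A2) *)
  (forall y g, is_gradient f y g -> exists z, is_argmin_lin Psi g z) ->
  (* conditional gradient algorithm with exact line search *)
  edom Psi (x 0%N) ->
  (forall k, is_argmin_lin Psi (gf (x k)) (s k)) ->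
  (forall k, 0 <= theta k <= 1 /\
     forall t, 0 <= t <= 1 ->
       ((1 - theta k)%:E * gap f Psi (x k) (gf (x k))
          + Dcal f Psi gf (x k) (s k) (theta k)
        <= (1 - t)%:E * gap f Psi (x k) (gf (x k))
          + Dcal f Psi gf (x k) (s k) t)%E) ->
  (forall k, x k.+1 = (1 - theta k) *: x k + theta k *: s k) ->
  (* (q,0)-growth property *)
  1 < q -> 0 < M ->
  (forall y z t, edom Psi y -> is_argmin_lin Psi (gf y) z -> 0 <= t <= 1 ->
     (Dcal f Psi gf y z t <= (M * t `^ q / q)%:E)%E) ->
  (best_gap f Psi gf x 1 <= (M / q)%:E)%E /\
  (forall k : nat, (1 <= k)%N ->
     (best_gap f Psi gf x k
        <= (M * (q / (k%:R - 1 + q `^ (q / (q - 1)))) `^ (q - 1))%:E)%E) /\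
  (q = 2 -> forall k : nat, (1 <= k)%N ->
     (best_gap f Psi gf x k <= (2 * M / (k%:R + 3))%:E)%E).
Proof.
(* closedness and (A2) only make the iteration well defined; the iterates are given here *)
move=> [_ f_proper f_convex] [_ Psi_proper Psi_convex] gf_gradient _ x0_edom s_argmin
  line_search x_succ q_gt1 M_gt0 growth.
split.
  exact: best_gap1_le f_convex f_proper Psi_convex Psi_proper gf_gradient x0_edom
    s_argmin line_search x_succ growth.
have rate := best_gap_rate f_convex f_proper Psi_convex Psi_proper gf_gradient x0_edom
  s_argmin line_search x_succ q_gt1 M_gt0 growth.
split=> // q2 k k_ge1.
by rewrite -rate_q2 -q2; exact: rate.
Qed.
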